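(* Let $M$ be an $N$-person normal form game matrix of dimensions $m_1\times\cdots\times m_N$ with payoffs $a^k_{i_1\dots i_N}$, and fix a profile $(p_1,\dots,p_N)$ with $1\le p_k\le m_k$. Let $S$ be the set of profiles that differ from $(p_1,\dots,p_N)$ in at most one coordinate. Suppose we are given real numbers $x^k_{\sigma}$ for each player $k\in\{1,\dots,N\}$ and each profile $\sigma\in S$, such that $\sum_{k=1}^N x^k_\sigma=\sum_{k=1}^N a^k_\sigma$ for every $\sigma\in S$. Then there is a unique $N$-person normal form game matrix $\widehat M$ of dimensions $m_1\times\cdots\times m_N$ with payoffs $\hat a^k$ such that $\widehat M$ can be obtained from $M$ by an OI-transformation and $\hat a^k_\sigma=x^k_\sigma$ for all $k$ and all $\sigma\in S$.
   Context: An $N$-person normal form game matrix of dimensions $m_1\times\cdots\times m_N$ assigns to each strategy profile $(i_1,\dots,i_N)$ with $1\le i_k\le m_k$ a payoff vector $(a^1_{i_1\dots i_N},\dots,a^N_{i_1\dots i_N})\in\mathbb{R}^N$, where $a^k$ is the payoff of player $k$ and $i_k$ indexes the strategy of player $k$. A preplay offer by player $p$ to player $q\neq p$ of amount $\delta\ge 0$ contingent on strategy $s$ of $q$ transforms a matrix by replacing, at every profile with $i_q=s$, the payoff $a^p$ by $a^p-\delta$ and $a^q$ by $a^q+\delta$, leaving all other payoffs unchanged; this map is a POI-transformation. An OI-transformation is any composition of finitely many POI-transformations. $\widehat M$ ''can be obtained from $M$ by an OI-transformation'' means $\widehat M=\tau(M)$ for some OI-transformation $\tau$. *)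

(* Real numbers are taken as an arbitrary realFieldType R
   (the statement is purely algebraic/order-theoretic). *)
From HB Require Import structures.
From mathcomp Require Import all_boot all_order all_algebra.
Set Implicit Arguments. Unset Strict Implicit. Unset Printing Implicit Defensive.
Import Order.TTheory GRing.Theory Num.Theory.
Local Open Scope ring_scope.

Section Games.
Variables (R : realFieldType) (N : nat) (m : 'I_N -> nat).

(* A strategy profile (i_1,...,i_N) with i_k in {0,...,m_k - 1}. *)
Definition profile := {dffun forall k : 'I_N, 'I_(m k)}.

Definition game := profile -> 'I_N -> R.

(* Preplay offer by player p to player q of amount d contingent on strategy s of q. *)
Definition poi (p q : 'I_N) (d : R) (s : 'I_(m q)) (M : game) : game :=
  fun sigma k =>
    if sigma q == s then
      (if k == p then M sigma k - d
       else if k == q then M sigma k + d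
       else M sigma k)
    else M sigma k.

Arguments poi : clear implicits.
Arguments poi p q d%_ring_scope s M _ _.
Inductive is_OI : (game -> game) -> Prop :=
| OI_id : is_OI id
| OI_comp (p q : 'I_N) (d : R) (s : 'I_(m q)) (tau : game -> game) :
    p != q -> 0 <= d -> is_OI tau -> is_OI (tau \o poi p q d s).

Definition near (pr sigma : profile) : bool :=
  (#|[pred k : 'I_N | sigma k != pr k]| <= 1)%N.

End Games.

From HB Require Import structures.
From mathcomp Require Import all_boot all_order all_algebra.
From mathcomp Require Import ring.
From Stdlib Require Import FunctionalExtensionality.
Import Order.TTheory GRing.Theory Num.Theory.
Set Implicit Arguments.
Unset Strict Implicit.
Unset Printing Implicit Defensive.
Local Open Scope ring_scope.

(* Call a payoff change D an additive shift if it has the form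
   D sigma k = \sum_j u j (sigma j) k, i.e. every player j contributes a
   vector u j t depending only on j's own strategy t.  We prove:
   (1) every OI-transformation adds an additive shift to every game, since a
       single preplay offer does and shifts compose additively;
   (2) conversely every balanced additive shift (each u j t sums to 0 over
       the players) is the effect of an OI-transformation: a balanced vector
       is a combination of transfers to j, contingent transfers are sums of
       offers, and an offer of negative amount is a combination of offers of
       nonnegative amounts;
   (3) an additive shift is determined by its values on the profiles that
       differ from pr in at most one coordinate (a telescoping identity).
   Uniqueness in Theorem 4 follows from (1) and (3); existence from (2),
   applied to an explicit balanced shift interpolating x - M near pr. *)

Section OITransformations.
Variables (R : realFieldType) (N : nat) (m : 'I_N -> nat).

Definition OI_shift (D : profile m -> 'I_N -> R) : Prop :=
  exists tau : game R m -> game R m, is_OI tau /\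
    forall M sigma k, tau M sigma k = M sigma k + D sigma k.

Lemma is_OI_comp (tau1 tau2 : game R m -> game R m) :
  is_OI tau1 -> is_OI tau2 -> is_OI (tau1 \o tau2).
Proof.
move=> OI1; elim=> [|p q d s tau pq d_ge0 _ IH] //.
exact: (OI_comp s pq d_ge0 IH).
Qed.

Lemma OI_shift_ext (D1 D2 : profile m -> 'I_N -> R) :
  OI_shift D1 -> (forall sigma k, D1 sigma k = D2 sigma k) -> OI_shift D2.
Proof. by move=> [tau [OI tauE]] D12; exists tau; split=> // M sigma k; rewrite tauE D12. Qed.

Lemma OI_shift_add (D1 D2 : profile m -> 'I_N -> R) :
  OI_shift D1 -> OI_shift D2 -> OI_shift (fun sigma k => D1 sigma k + D2 sigma k).
Proof.
move=> [tau1 [OI1 tau1E]] [tau2 [OI2 tau2E]].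
exists (tau1 \o tau2); split; first exact: is_OI_comp.
by move=> M sigma k /=; rewrite tau1E tau2E -addrA (addrC (D2 sigma k)).
Qed.

Lemma OI_shift_sum (I : Type) (r : seq I) (P : pred I) (F : I -> profile m -> 'I_N -> R) :
  (forall i, P i -> OI_shift (F i)) ->
  OI_shift (fun sigma k => \sum_(i <- r | P i) F i sigma k).
Proof.
move=> OI_F; elim: r => [|i r IH].
  by exists id; split=> [|M sigma k]; [exact: OI_id | rewrite big_nil addr0].
case Pi: (P i).
  by apply: (OI_shift_ext (OI_shift_add (OI_F i Pi) IH)) => sigma k; rewrite big_cons Pi.
by apply: (OI_shift_ext IH) => sigma k; rewrite big_cons Pi.
Qed.

Definition offer (p q : 'I_N) (s : 'I_(m q)) (d : R) (sigma : profile m) (k : 'I_N) : R :=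
  if sigma q == s then d * ((k == q)%:R - (k == p)%:R) else 0.

Lemma poiE (p q : 'I_N) (d : R) (s : 'I_(m q)) M sigma k : p != q ->
  poi p d s M sigma k = M sigma k + offer p s d sigma k.
Proof.
move=> pq; rewrite /poi /offer; case: (sigma q == s); last by rewrite addr0.
have [->|kp] := eqVneq k p; first by rewrite (negbTE pq) /=; ring.
by have [->|kq] := eqVneq k q; rewrite /=; ring.
Qed.

Lemma sum_offers (p q : 'I_N) (c : 'I_(m q) -> R) sigma k :
  \sum_s offer p s (c s) sigma k = c (sigma q) * ((k == q)%:R - (k == p)%:R).
Proof. by rewrite /offer -big_mkcond /= (big_pred1 (sigma q)). Qed.

Lemma OI_shift_offer_nonneg (p q : 'I_N) (s : 'I_(m q)) (d : R) :
  p != q -> 0 <= d -> OI_shift (offer p s d).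
Proof.
move=> pq d_ge0; exists (id \o poi p d s).
by split=> [|M sigma k]; [exact: OI_comp (OI_id _ _) | exact: poiE].
Qed.

(* Offers of any sign are OI-shifts: a negative offer contingent on [s]
   equals nonnegative offers on all other strategies of [q] together with
   an unconditional nonnegative offer in the opposite direction. *)
Lemma OI_shift_offer (p q : 'I_N) (s : 'I_(m q)) (d : R) :
  p != q -> OI_shift (offer p s d).
Proof.
move=> pq; have [d_ge0|d_lt0] := lerP 0 d; first exact: OI_shift_offer_nonneg.
have qp : q != p by rewrite eq_sym.
have Nd_ge0 : 0 <= - d by rewrite oppr_ge0 ltW.
have others := @OI_shift_sum _ (index_enum _) (fun s' => s' != s)
  (fun s' => offer p s' (- d)) (fun s' _ => OI_shift_offer_nonneg s' pq Nd_ge0).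
have reverse := @OI_shift_sum _ (index_enum _) xpredT
  (fun r => offer q r (- d)) (fun r _ => OI_shift_offer_nonneg r qp Nd_ge0).
apply: (OI_shift_ext (OI_shift_add others reverse)) => sigma k.
have all_s := sum_offers p (fun _ : 'I_(m q) => - d) sigma k; rewrite (bigD1 s) //= in all_s.
rewrite sum_offers -(addKr (offer p s (- d) sigma k) (\sum_(s' | s' != s) _)) all_s.
by rewrite /offer; case: ifP => _; ring.
Qed.

Definition additive_shift (u : forall j : 'I_N, 'I_(m j) -> 'I_N -> R)
    (sigma : profile m) (k : 'I_N) : R :=
  \sum_j u j (sigma j) k.

Lemma OI_shift_contingent (p q : 'I_N) (c : 'I_(m q) -> R) : p != q ->
  OI_shift (fun sigma k => c (sigma q) * ((k == q)%:R - (k == p)%:R)).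
Proof.
move=> pq; apply: (OI_shift_ext (@OI_shift_sum _ (index_enum _) xpredT
  (fun s => offer p s (c s)) (fun s _ => OI_shift_offer s (c s) pq))) => sigma k.
exact: sum_offers.
Qed.

Lemma zero_sum_decomp (v : 'I_N -> R) (j k : 'I_N) : \sum_i v i = 0 ->
  v k = \sum_(i | i != j) - v i * ((k == j)%:R - (k == i)%:R).
Proof.
rewrite (bigD1 j) //= => /eqP; rewrite addr_eq0 => /eqP vj.
have [->|kj] := eqVneq k j.
  rewrite vj -sumrN; apply: eq_bigr => i ij.
  by rewrite eq_sym (negbTE ij) /=; ring.
rewrite (bigD1 k) //= big1 => [|i /andP[_ ik]]; first by rewrite eqxx /=; ring.
by rewrite eq_sym (negbTE ik) /=; ring.
Qed.

Lemma OI_shift_additive (u : forall j : 'I_N, 'I_(m j) -> 'I_N -> R) :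
  (forall j t, \sum_k u j t k = 0) -> OI_shift (additive_shift u).
Proof.
move=> balanced.
have transfers j : OI_shift (fun sigma k =>
    \sum_(i <- index_enum _ | i != j) - u j (sigma j) i * ((k == j)%:R - (k == i)%:R)).
  by apply: OI_shift_sum => i ij; exact: OI_shift_contingent (fun t => - u j t i) ij.
apply: (OI_shift_ext (@OI_shift_sum _ (index_enum _) xpredT _ (fun j _ => transfers j))).
move=> sigma k; apply: eq_bigr => j _.
by rewrite -zero_sum_decomp.
Qed.

Lemma offer_additive (p q : 'I_N) (s : 'I_(m q)) (d : R) :
  offer p s d = additive_shift (fun j t k =>
    if (j == q) && (val t == val s) then d * ((k == q)%:R - (k == p)%:R) else 0).
Proof.
apply: functional_extensionality => sigma; apply: functional_extensionality => k.
rewrite /additive_shift (bigD1 q) //= big1 => [|j /negbTE -> //].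
by rewrite eqxx val_eqE addr0.
Qed.

Lemma OI_additive (tau : game R m -> game R m) : is_OI tau ->
  exists u, forall M sigma k, tau M sigma k = M sigma k + additive_shift u sigma k.
Proof.
elim=> [|p q d s tau0 pq _ _ [u tau0E]].
  by exists (fun _ _ _ => 0) => M sigma k; rewrite /additive_shift big1 ?addr0.
exists (fun j t k =>
  (if (j == q) && (val t == val s) then d * ((k == q)%:R - (k == p)%:R) else 0) + u j t k).
by move=> M sigma k; rewrite /= tau0E poiE // offer_additive -addrA -big_split.
Qed.

Definition upd (pr : profile m) (j : 'I_N) (t : 'I_(m j)) : profile m :=
  [ffun i => dfwith (fun i => pr i) t i].
Arguments upd pr j t : clear implicits.

Lemma upd_in (pr : profile m) j t : upd pr j t j = t.
Proof. by rewrite ffunE dfwith_in. Qed.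

Lemma upd_out (pr : profile m) j t i : j != i -> upd pr j t i = pr i.
Proof. by move=> ji; rewrite ffunE dfwith_out. Qed.

Lemma upd_self (pr : profile m) j : upd pr j (pr j) = pr.
Proof.
apply/ffunP => i; have [<-|ji] := eqVneq j i; first exact: upd_in.
exact: upd_out.
Qed.

Lemma near_refl (pr : profile m) : near pr pr.
Proof. by rewrite /near eq_card0 // => i; rewrite !inE eqxx. Qed.

Lemma near_upd (pr : profile m) j t : near pr (upd pr j t).
Proof.
rewrite /near (leq_trans (subset_leq_card (_ : _ \subset pred1 j))) ?card1 //.
by apply/subsetP => i; rewrite !inE; apply: contraR => ij; rewrite upd_out // eq_sym.
Qed.

Lemma near_deviation_unique (pr sigma : profile m) i j : near pr sigma ->
  sigma i != pr i -> sigma j != pr j -> i = j.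
Proof.
move=> /card_le1P near_sigma dev_i dev_j.
by have := near_sigma j dev_j i; rewrite !inE dev_i => /esym/eqP.
Qed.

Lemma upd_near (pr sigma : profile m) j : near pr sigma -> sigma j != pr j ->
  upd pr j (sigma j) = sigma.
Proof.
move=> near_sigma dev_j; apply/ffunP => i.
have [<-|ji] := eqVneq j i; first exact: upd_in.
rewrite upd_out //; apply/eqP; rewrite eq_sym; apply: contraTT ji => dev_i.
by rewrite (near_deviation_unique near_sigma dev_j dev_i) eqxx.
Qed.

Lemma near_telescope (f : profile m -> R) (pr sigma : profile m) : near pr sigma ->
  \sum_j (f (upd pr j (sigma j)) - f pr) = f sigma - f pr.
Proof.
move=> near_sigma; have [j dev_j|no_dev] := pickP (fun j => sigma j != pr j).
  rewrite (bigD1 j) //= upd_near // big1 ?addr0 // => i ij.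
  have [->|dev_i] := eqVneq (sigma i) (pr i); first by rewrite upd_self subrr.
  by rewrite (near_deviation_unique near_sigma dev_i dev_j) eqxx in ij.
have -> : sigma = pr by apply/ffunP => i; apply/eqP/negbFE/no_dev.
by rewrite big1 ?subrr // => j _; rewrite upd_self subrr.
Qed.

Lemma additive_telescope (u : forall j : 'I_N, 'I_(m j) -> 'I_N -> R)
    (pr sigma : profile m) k :
  additive_shift u sigma k - additive_shift u pr k =
  \sum_j (additive_shift u (upd pr j (sigma j)) k - additive_shift u pr k).
Proof.
rewrite /additive_shift -sumrB; apply: eq_bigr => j _.
rewrite [in RHS](bigD1 j) //= [X in _ = _ - X](bigD1 j) //= upd_in.
rewrite (eq_bigr (fun i => u i (pr i) k)) => [|i ij]; first by rewrite opprD addrACA subrr addr0.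
by rewrite upd_out // eq_sym.
Qed.

Lemma additive_shift_near0 (u : forall j : 'I_N, 'I_(m j) -> 'I_N -> R) (pr : profile m) :
  (forall sigma, near pr sigma -> forall k, additive_shift u sigma k = 0) ->
  forall sigma k, additive_shift u sigma k = 0.
Proof.
move=> u_near0 sigma k; have := additive_telescope u pr sigma k.
rewrite (u_near0 pr (near_refl pr)) subr0 => ->.
by apply: big1 => j _; rewrite u_near0 ?near_upd ?subr0.
Qed.

Lemma OI_image_unique (M : game R m) (pr : profile m) (tau1 tau2 : game R m -> game R m) :
  is_OI tau1 -> is_OI tau2 ->
  (forall sigma, near pr sigma -> forall k, tau1 M sigma k = tau2 M sigma k) ->
  tau1 M = tau2 M.
Proof.
move=> /OI_additive[u1 tau1E] /OI_additive[u2 tau2E] agree.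
pose u j t k := u1 j t k - u2 j t k.
have diffE sigma k : tau1 M sigma k - tau2 M sigma k = additive_shift u sigma k.
  by rewrite tau1E tau2E /additive_shift sumrB opprD addrACA subrr add0r.
apply: functional_extensionality => sigma; apply: functional_extensionality => k.
apply/eqP; rewrite -subr_eq0 diffE; apply/eqP.
by apply: (additive_shift_near0 (pr := pr)) => nu near_nu k'; rewrite -diffE agree ?subrr.
Qed.

(* The deficit y = x - M is realized by the
   balanced additive shift giving player [j] playing [t] the increment of y
   from [pr] to [upd pr j t], plus an equal share of y at [pr]. *)
Lemma OI_reach_near (M : game R m) (pr : profile m) (x : profile m -> 'I_N -> R) :
  (forall sigma, near pr sigma -> \sum_k x sigma k = \sum_k M sigma k) ->
  exists tau, is_OI tau /\ forall sigma, near pr sigma -> forall k, tau M sigma k = x sigma k.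
Proof.
move=> x_total; pose y sigma k := x sigma k - M sigma k.
have y_total sigma : near pr sigma -> \sum_k y sigma k = 0.
  by move=> near_sigma; rewrite sumrB x_total // subrr.
pose u j (t : 'I_(m j)) k := y (upd pr j t) k - y pr k + y pr k / N%:R.
have balanced j t : \sum_k u j t k = 0.
  rewrite big_split sumrB -mulr_suml /=.
  by rewrite !y_total ?near_upd ?near_refl // subrr mul0r addr0.
have [tau [OI tauE]] := OI_shift_additive balanced.
exists tau; split=> // sigma near_sigma k; rewrite tauE.
have N_pos : (0 < N)%N := leq_ltn_trans (leq0n k) (ltn_ord k).
rewrite /additive_shift big_split /= (near_telescope (fun nu => y nu k)) // sumr_const card_ord.
by rewrite -[_ *+ N]mulr_natr divfK ?pnatr_eq0 -?lt0n // /y subrK addrC subrK.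
Qed.

End OITransformations.

Theorem theorem4 (R : realFieldType) (N : nat) (m : 'I_N -> nat)
  (M : game R m) (pr : profile m) (x : profile m -> 'I_N -> R) :
  (forall sigma : profile m, near pr sigma ->
     \sum_(k < N) x sigma k = \sum_(k < N) M sigma k) ->
  exists! Mh : game R m,
    (exists tau : game R m -> game R m, @is_OI R N m tau /\ Mh = tau M) /\
    (forall sigma : profile m, near pr sigma -> forall k : 'I_N, Mh sigma k = x sigma k).
Proof.
move=> x_total; have [tau [OI tauE]] := OI_reach_near x_total.
exists (tau M); split; first by split=> //; exists tau.
move=> _ [[tau' [OI' ->]] tau'E].
by apply: (OI_image_unique (pr := pr) OI OI') => sigma near_sigma k; rewrite tauE ?tau'E.
Qed.
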